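(* Let $n\ge 1$, $N=2^n$ and $s=(N-1)/2$. Let $0\le j<N/2$ be an integer and let $z\in\tilde\Xi^{(N)}_j$, i.e. $z=W^{(N)}_j\oplus e$ for some $e\in\{0,1\}^N$ with Hamming weight $|e|<N/4$ and $e\preccurlyeq W^{(N)}_{N-1}$. Then $$\hat H^{\otimes n}\,\hat U_z\,\hat H^{\otimes n}\left(\left|\tfrac12\right\rangle_s+\left|-\tfrac12\right\rangle_s\right)=\left|\tfrac12+j\right\rangle_s+\left|-\tfrac12-j\right\rangle_s .$$
   Context: Work in $\mathbb{C}^N$ with computational basis $\{|y\rangle : y=0,\dots,N-1\}$. The spin basis states $|m\rangle_s$, $m\in\{-s,\dots,s\}$, are identified with computational basis states via $|m\rangle_s=|m+s\rangle$. For $x,y\in\{0,\dots,N-1\}$ let $x\cdot y\in\{0,1\}$ be the inner product modulo 2 of their $n$-bit binary expansions. $\hat H^{\otimes n}|y\rangle=N^{-1/2}\sum_{x=0}^{N-1}(-1)^{x\cdot y}|x\rangle$. The Hadamard codeword $W^{(N)}_j\in\{0,1\}^N$ has bit $x\cdot j$ at position $x\in\{0,\dots,N-1\}$; in particular $W^{(N)}_{N-1}$ has a 1 exactly at the positions $x$ whose binary expansion has an odd number of ones. For $a,b\in\{0,1\}^N$, $a\preccurlyeq b$ means: whenever $a_x=1$ then $b_x=1$. $\oplus$ is bitwise addition mod 2. For $z\in\{0,1\}^N$, $\hat U_z$ is the diagonal unitary $\hat U_z|x\rangle=(-1)^{z_x}|x\rangle$. The set $\tilde\Xi^{(N)}_j$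 (codewords with restricted errors) is the set of strings $W^{(N)}_j\oplus e$ with $e\preccurlyeq W^{(N)}_{N-1}$ and $|e|\in\{0,1,\dots,N/4-1\}$. *)

From HB Require Import structures.
From mathcomp Require Import all_boot all_order all_algebra all_field.
Set Implicit Arguments. Unset Strict Implicit. Unset Printing Implicit Defensive.
Import Order.TTheory GRing.Theory Num.Theory.
Local Open Scope ring_scope.

Definition bitdot (n x y : nat) : bool :=
  odd (\sum_(k < n) (odd (x %/ 2 ^ k) && odd (y %/ 2 ^ k)))%N.

Definition hadamard (n : nat) : 'M[algC]_(2 ^ n) :=
  (sqrtC (2 ^ n)%:R)^-1 *: \matrix_(x, y) ((-1) ^+ bitdot n x y).

Definition walsh (n j : nat) : {ffun 'I_(2 ^ n) -> bool} :=
  [ffun x : 'I_(2 ^ n) => bitdot n x j].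

Definition bprec (N : nat) (a b : {ffun 'I_N -> bool}) : Prop :=
  forall x, a x -> b x.

Definition bxor (N : nat) (a b : {ffun 'I_N -> bool}) : {ffun 'I_N -> bool} :=
  [ffun x => a x (+) b x].

Definition hweight (N : nat) (a : {ffun 'I_N -> bool}) : nat := #|[set x | a x]|.

Definition Uz (N : nat) (z : {ffun 'I_N -> bool}) : 'M[algC]_N :=
  diag_mx (\row_x ((-1) ^+ z x)).

Definition ket (N k : nat) : 'cV[algC]_N := \col_i ((i == k :> nat)%:R).

(* spin basis |m>_s = |m + s>, s = (2^n - 1)/2; the half-integer m is
   given through twice its value m2 = 2m (an odd integer), so that the
   computational index m + s equals (m2 + 2^n - 1)/2. *)
Definition spinket (n : nat) (m2 : int) : 'cV[algC]_(2 ^ n) :=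
  let idx2 : int := (m2 + ((2 ^ n).-1)%:Z)%R in
  ket (2 ^ n) (absz idx2 %/ 2)%N.

(* With a = 2^(n-1) and b = 2^(n-1) - 1 the indices of |1/2>_s and |-1/2>_s,
   the vector H(|a> + |b>) has entries proportional to (-1)^(x.a) + (-1)^(x.b),
   which vanish wherever x.a + x.b = x.(N-1) is odd, i.e. on the only positions
   where the error e may be nonzero.  Hence U_z may be replaced by U_(W_j) there,
   and U_(W_j) H |y> = H |y xor j> together with H^2 = 1 gives
   |a xor j> + |b xor j> = |a + j> + |b - j>. *)
From mathcomp Require Import all_boot all_order all_algebra all_field.
From mathcomp Require Import zify.
Import Order.TTheory GRing.Theory Num.Theory.

Set Implicit Arguments.
Unset Strict Implicit.
Unset Printing Implicit Defensive.

Definition bit (i x : nat) : bool := odd (x %/ 2 ^ i).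

Lemma bit0n i : bit i 0 = false.
Proof. by rewrite /bit div0n. Qed.

Lemma bitS i x : bit i.+1 x = bit i x./2.
Proof. by rewrite /bit expnS divnMA divn2. Qed.

Lemma bit_small m i x : x < 2 ^ m -> m <= i -> bit i x = false.
Proof.
move=> hx hi; rewrite /bit divn_small //; apply: leq_trans hx _.
by rewrite leq_exp2l.
Qed.

Lemma bitDpow_lt m i x : i < m -> bit i (x + 2 ^ m) = bit i x.
Proof.
move=> hi; rewrite /bit -(subnK (ltnW hi)) expnD addnC divnMDl ?expn_gt0 //.
by rewrite oddD oddX subn_eq0 leqNgt hi.
Qed.

Lemma bitDpow_eq m x : x < 2 ^ m -> bit m (x + 2 ^ m).
Proof.
move=> hx; rewrite /bit addnC -[X in X + x]mul1n divnMDl ?expn_gt0 //.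
by rewrite divn_small.
Qed.

Lemma bit_compl m i x : x < 2 ^ m -> i < m -> bit i (2 ^ m - 1 - x) = ~~ bit i x.
Proof.
move=> hx hi; rewrite /bit.
have hP : 0 < 2 ^ i by rewrite expn_gt0.
have hm : 2 ^ m = 2 ^ (m - i) * 2 ^ i by rewrite -expnD subnK // ltnW.
have hQe : odd (2 ^ (m - i)) = false by rewrite oddX subn_eq0 leqNgt hi.
move: hx hQe; rewrite hm (divn_eq x (2 ^ i)).
have := ltn_pmod x hP.
set P := 2 ^ i; set Q := 2 ^ (m - i); set q := x %/ P; set r := x %% P => hr hx hQe.
have hq : q < Q by move: hx; rewrite -ltn_divLR // divnMDl // (divn_small hr) addn0.
(* complementing x in [0, Q P) complements its quotient and remainder by P *)
have -> : Q * P - 1 - (q * P + r) = (Q - 1 - q) * P + (P - 1 - r).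
  have [t ->] : exists t, Q = q.+1 + t by exists (Q - q.+1); rewrite subnKC.
  have -> : q.+1 + t - 1 - q = t by lia.
  rewrite mulnDl mulSn; set a := q * P; set b := t * P; lia.
rewrite divnMDl // divn_small ?addn0; last lia.
rewrite -subnDA oddB ?hQe; last lia.
by rewrite divnMDl // divn_small // addn0 add1n.
Qed.

Lemma bit_inj n x y : x < 2 ^ n -> y < 2 ^ n ->
  (forall i, i < n -> bit i x = bit i y) -> x = y.
Proof.
elim: n x y => [|n IH] x y.
  by rewrite expn0 !ltnS !leqn0 => /eqP -> /eqP ->.
move=> hx hy hb.
have odd_xy : odd x = odd y by have := hb 0 erefl; rewrite /bit expn0 !divn1.
have half_xy : x./2 = y./2.
  apply: IH; first by move: hx; rewrite expnS -divn2; lia.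
    by move: hy; rewrite expnS -divn2; lia.
  by move=> i hi; rewrite -!bitS hb.
by rewrite -(odd_double_half x) -(odd_double_half y) odd_xy half_xy.
Qed.

Lemma bit_pow m i : i <= m -> bit i (2 ^ m) = (i == m).
Proof.
rewrite leq_eqVlt => /predU1P[->|hi].
  by have := bitDpow_eq (expn_gt0 2 m); rewrite add0n eqxx.
by have := bitDpow_lt 0 hi; rewrite add0n bit0n (ltn_eqF hi).
Qed.

Lemma bit_predpow m i : i <= m -> bit i (2 ^ m - 1) = (i < m).
Proof.
rewrite leq_eqVlt => /predU1P[->|hi].
  by rewrite ltnn (@bit_small m) // subn1 prednK ?expn_gt0.
by have := bit_compl (expn_gt0 2 m) hi; rewrite subn0 bit0n hi.
Qed.

Lemma bitdot_bigE n x y :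
  bitdot n x y = \big[addb/false]_(k < n) (bit k x && bit k y).
Proof.
rewrite /bitdot (big_morph odd oddD (erefl (odd 0))).
by apply: eq_bigr => k _; case: (_ && _).
Qed.

Definition bits_xor (n y a b : nat) : Prop :=
  forall i, i < n -> bit i y = bit i a (+) bit i b.

Lemma bitdot_xor n x y a b :
  bits_xor n y a b -> bitdot n x y = bitdot n x a (+) bitdot n x b.
Proof.
move=> hy; rewrite !bitdot_bigE -big_split /=.
apply: eq_bigr => i _; rewrite hy //.
by case: (bit i x); case: (bit i a); case: (bit i b).
Qed.

Lemma bits_xor_addpow m j : j < 2 ^ m -> bits_xor m.+1 (j + 2 ^ m) j (2 ^ m).
Proof.
move=> hj i; rewrite ltnS => hi; rewrite bit_pow //.
move: hi; rewrite leq_eqVlt => /predU1P[->|hi].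
  by rewrite eqxx (bit_small hj) // addbT (bitDpow_eq hj).
by rewrite bitDpow_lt // (ltn_eqF hi) addbF.
Qed.

Lemma bits_xor_subpredpow m j : j < 2 ^ m -> bits_xor m.+1 (2 ^ m - 1 - j) j (2 ^ m - 1).
Proof.
move=> hj i; rewrite ltnS => hi; rewrite bit_predpow //.
move: hi; rewrite leq_eqVlt => /predU1P[->|hi].
  by rewrite ltnn (bit_small hj) // (@bit_small m) //; lia.
by rewrite bit_compl // hi addbT.
Qed.

Lemma bits_xor_all_ones m : bits_xor m.+1 (2 ^ m.+1 - 1) (2 ^ m) (2 ^ m - 1).
Proof.
move=> i hi; have le_im : i <= m by rewrite -ltnS.
rewrite bit_predpow ?(ltnW hi) // hi bit_pow // bit_predpow //.
move: hi; rewrite ltnS leq_eqVlt => /predU1P[->|hi].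
  by rewrite eqxx ltnn.
by rewrite (ltn_eqF hi) hi.
Qed.

Local Open Scope ring_scope.

Lemma sign_bitdot n x y :
  (-1) ^+ bitdot n x y = \prod_(k < n) (-1) ^+ (bit k x && bit k y) :> algC.
Proof. by rewrite /bitdot signr_odd prodrXr. Qed.

Lemma sum_prod_bits n (f : nat -> bool -> algC) :
  \sum_(0 <= x < 2 ^ n) \prod_(i < n) f i (bit i x)
  = \prod_(i < n) (f i false + f i true).
Proof.
elim: n => [|n IH]; first by rewrite expn0 big_nat1 !big_ord0.
have le_pow : (2 ^ n <= 2 ^ n.+1)%N by rewrite leq_exp2l.
rewrite (big_cat_nat (n := 2 ^ n)) //= -{2}(add0n (2 ^ n)%N) big_addn.
rewrite (_ : (2 ^ n.+1 - 2 ^ n = 2 ^ n)%N); last by rewrite expnS; lia.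
rewrite big_ord_recr /= mulrDr -IH !mulr_suml.
congr (_ + _); rewrite big_nat_cond [in RHS]big_nat_cond;
  apply: eq_bigr => x /andP[/andP[_ hx] _]; rewrite big_ord_recr /=.
  by rewrite (bit_small hx) // mulr1.
rewrite bitDpow_eq //; congr (_ * _).
by apply: eq_bigr => i _; rewrite bitDpow_lt.
Qed.

Lemma hadamard_orthogonal n k y : (k < 2 ^ n)%N -> (y < 2 ^ n)%N ->
  \sum_(x < 2 ^ n) (-1) ^+ bitdot n k x * (-1) ^+ bitdot n x y
  = if k == y then 2 ^+ n else 0 :> algC.
Proof.
move=> hk hy.
pose f i (t : bool) : algC := (-1) ^+ (bit i k && t) * (-1) ^+ (t && bit i y).
transitivity (\sum_(0 <= x < 2 ^ n) \prod_(i < n) f i (bit i x)).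
  by rewrite big_mkord; apply: eq_bigr => x _; rewrite !sign_bitdot -big_split.
rewrite sum_prod_bits.
under eq_bigr do rewrite /f !andbT !andTb !andbF !andFb expr0 mulr1 -signr_addb.
case: ifP => [/eqP <-|/negbT neq_ky].
  by rewrite (eq_bigr (fun _ => 2)) ?prodr_const ?card_ord // => i _; rewrite addbb.
have [i bit_neq] : exists i : 'I_n, bit i k != bit i y.
  apply/existsP; rewrite -negb_forall; apply: contra neq_ky => /forallP bits_eq.
  by apply/eqP/(bit_inj hk hy) => i hi; apply/eqP: (bits_eq (Ordinal hi)).
by rewrite (bigD1 i) //= -negb_eqb bit_neq expr1 subrr mul0r.
Qed.

Lemma hadamardE n (x y : 'I_(2 ^ n)) :
  hadamard n x y = (sqrtC (2 ^ n)%:R)^-1 * (-1) ^+ bitdot n x y.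
Proof. by rewrite !mxE. Qed.

Lemma hadamardK n : hadamard n *m hadamard n = 1%:M.
Proof.
apply/matrixP => k y; rewrite !mxE.
under eq_bigr do rewrite !hadamardE mulrACA.
rewrite -mulr_sumr hadamard_orthogonal // -(inj_eq val_inj).
case: (_ == _); rewrite ?mulr0 //.
by rewrite -invfM -expr2 sqrtCK natrX mulVf // expf_neq0 ?pnatr_eq0.
Qed.

Lemma mul_ket N (A : 'M[algC]_N) t (ht : (t < N)%N) :
  A *m ket N t = \col_x A x (Ordinal ht).
Proof.
apply/matrixP => x y; rewrite !mxE (bigD1 (Ordinal ht)) //= !mxE eqxx mulr1.
rewrite big1 ?addr0 // => i hi; rewrite mxE.
rewrite (_ : (i == t :> nat) = false) ?mulr0 //.
by apply: contraNF hi => /eqP i_t; apply/eqP/val_inj.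
Qed.

Lemma Uz_walsh_hadamard_ket n j a y : (a < 2 ^ n)%N -> (y < 2 ^ n)%N ->
  bits_xor n y j a ->
  Uz (walsh n j) *m (hadamard n *m ket _ a) = hadamard n *m ket _ y.
Proof.
move=> ha hy hxor; rewrite !mul_ket /Uz mul_diag_mx.
apply/matrixP => x i; rewrite !mxE ffunE (bitdot_xor x hxor) signr_addb.
by rewrite mulrCA.
Qed.

Lemma Uz_bxor_supp N (w e : {ffun 'I_N -> bool}) (v : 'cV[algC]_N) :
  (forall x, e x -> v x 0 = 0) -> Uz (bxor w e) *m v = Uz w *m v.
Proof.
move=> v_supp; rewrite /Uz !mul_diag_mx; apply/matrixP => x i.
rewrite !mxE ffunE [i]ord1; case ex: (e x); last by rewrite addbF.
by rewrite v_supp // !mulr0.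
Qed.

Lemma hadamard_ket_pair_supp n a b y (x : 'I_(2 ^ n)) :
  (a < 2 ^ n)%N -> (b < 2 ^ n)%N -> bits_xor n y a b -> bitdot n x y ->
  (hadamard n *m (ket _ a + ket _ b)) x 0 = 0.
Proof.
move=> ha hb hxor; rewrite (bitdot_xor x hxor) mulmxDr !mul_ket !mxE -mulrDr.
case: (bitdot n x a); case: (bitdot n x b) => //= _;
  by rewrite expr1 expr0 ?addNr ?subrr mulr0.
Qed.

Lemma spinket_pos m j : spinket m.+1 (1 + 2 * j%:Z) = ket _ (j + 2 ^ m).
Proof. by rewrite /spinket; congr ket; rewrite expnS; lia. Qed.

Lemma spinket_neg m j : (j < 2 ^ m)%N ->
  spinket m.+1 (-1 - 2 * j%:Z) = ket _ (2 ^ m - 1 - j).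
Proof. by move=> hj; rewrite /spinket; congr ket; rewrite expnS; lia. Qed.

Theorem lemma2 (n j : nat) (z : {ffun 'I_(2 ^ n) -> bool}) :
  (0 < n)%N ->
  (j * 2 < 2 ^ n)%N ->
  (exists e : {ffun 'I_(2 ^ n) -> bool},
      [/\ z = bxor (walsh n j) e,
          (4 * hweight e < 2 ^ n)%N &
          bprec e (walsh n (2 ^ n - 1))]) ->
  hadamard n *m Uz z *m hadamard n *m (spinket n 1 + spinket n (-1))
  = spinket n (1 + 2 * j%:Z) + spinket n (-1 - 2 * j%:Z).
Proof.
move=> n_gt0 hj [e [hz _ e_sub]]; subst z.
case: n n_gt0 hj e e_sub => // m _ hj e e_sub.
have pow_gt0 := expn_gt0 2 m.
have hjm : (j < 2 ^ m)%N by move: hj; rewrite expnS; lia.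
have [a_lt b_lt] : (2 ^ m < 2 ^ m.+1)%N /\ (2 ^ m - 1 < 2 ^ m.+1)%N.
  by rewrite expnS; lia.
have [aj_lt bj_lt] : (j + 2 ^ m < 2 ^ m.+1)%N /\ (2 ^ m - 1 - j < 2 ^ m.+1)%N.
  by rewrite expnS; lia.
have := spinket_pos m 0; have := spinket_neg pow_gt0.
rewrite mulr0 addr0 subr0 subn0 add0n => -> ->.
rewrite spinket_pos spinket_neg // -!mulmxA Uz_bxor_supp; last first.
  move=> x /e_sub; rewrite ffunE.
  exact: hadamard_ket_pair_supp a_lt b_lt (@bits_xor_all_ones m).
rewrite !mulmxDr (Uz_walsh_hadamard_ket a_lt aj_lt (bits_xor_addpow hjm)).
rewrite (Uz_walsh_hadamard_ket b_lt bj_lt (bits_xor_subpredpow hjm)).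
by rewrite !mulmxA hadamardK !mul1mx.
Qed.
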